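(* Fix $\alpha\ge1$, $c>0$. For $t\ge0$ let $\Lambda_t$ be the qubit Pauli channel $\Lambda_t[\rho]=\sum_{\mu=0}^3p_\mu(t)\sigma_\mu\rho\sigma_\mu$ ($\sigma_0=\mathbb 1$, $\sigma_{1,2,3}$ the Pauli matrices) with $p_0(t)=\tfrac14[1+e^{-2\alpha ct}(1+2e^{\alpha ct}\cosh^\alpha(ct))]$, $p_1(t)=p_2(t)=\tfrac14(1-e^{-2\alpha ct})$, $p_3(t)=\tfrac14[1+e^{-2\alpha ct}(1-2e^{\alpha ct}\cosh^\alpha(ct))]$ (the solution of $\dot\rho=\sum_i\gamma_i(t)(\sigma_i\rho\sigma_i-\rho)$ with $\gamma_1=\gamma_2=\alpha c/2$, $\gamma_3(t)=-\tfrac{\alpha c}{2}\tanh(ct)$). Each $\Lambda_t$ is invertible; for $0\le s\le t$ set $V_{t,s}=\Lambda_t\circ\Lambda_s^{-1}$ and $\Omega_{V_{t,s}}=2(V_{t,s}\otimes\mathrm{id})[|\Phi^+\rangle\langle\Phi^+|]$. Then, with $\lambda_\tau=e^{-c\tau}$ and $\Gamma_{t,s}=\lambda_{t-s}\cosh(ct)\,\mathrm{sech}(cs)$, $$\Omega_{V_{t,s}}=p_1P_{\Phi^+}+p_2P_{\Phi^-}+(1-p_1-p_2)P_{\Psi^+}^{T_B},\qquad p_1=\tfrac12(\lambda_{t-s}^{2\alpha}+\Gamma_{t,s}^\alpha),\ p_2=\tfrac12(1-\Gamma_{t,s}^\alpha),$$ where $p_1\ge0$, $p_2\ge0$, $p_1+p_2\le1$.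 Consequently $V_{t,s}[X]=p\,\mathcal E_1[X]+(1-p)\,\mathcal E_2[X^T]$ for some $p\in[0,1]$ and CPTP qubit maps $\mathcal E_1,\mathcal E_2$.
   Context: $|\Phi^\pm\rangle=(|00\rangle\pm|11\rangle)/\sqrt2$, $|\Psi^\pm\rangle=(|01\rangle\pm|10\rangle)/\sqrt2$, $P_\psi=2|\psi\rangle\langle\psi|$, and $T_B$ denotes partial transposition on the second qubit. *)

From Stdlib Require Import Reals.
Open Scope R_scope.

Record Cx := mkCx { re : R; im : R }.
Definition Cadd (a b : Cx) : Cx := mkCx (re a + re b) (im a + im b).
Definition Cmul (a b : Cx) : Cx :=
  mkCx (re a * re b - im a * im b) (re a * im b + im a * re b).
Definition Cconj (a : Cx) : Cx := mkCx (re a) (- im a).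
Definition RtoC (r : R) : Cx := mkCx r 0.
Definition C0 : Cx := RtoC 0.
Definition C1 : Cx := RtoC 1.
Definition Ci : Cx := mkCx 0 1.

Fixpoint csum (n : nat) (f : nat -> Cx) : Cx :=
  match n with O => C0 | S m => Cadd (csum m f) (f m) end.

(* ---------- matrices: entries with indices < n are meaningful ---------- *)
Definition Mat := nat -> nat -> Cx.
Definition Meq (n : nat) (A B : Mat) : Prop :=
  forall i j, (i < n)%nat -> (j < n)%nat -> A i j = B i j.
Definition madd (A B : Mat) : Mat := fun i j => Cadd (A i j) (B i j).
Definition mscale (a : Cx) (A : Mat) : Mat := fun i j => Cmul a (A i j).
Definition mmul (n : nat) (A B : Mat) : Mat :=
  fun i j => csum n (fun k => Cmul (A i k) (B k j)).
Definition mtr (n : nat) (A : Mat) : Cx := csum n (fun i => A i i).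
Definition transpose (A : Mat) : Mat := fun i j => A j i.

Definition quad (n : nat) (A : Mat) (v : nat -> Cx) : Cx :=
  csum n (fun i => csum n (fun j => Cmul (Cconj (v i)) (Cmul (A i j) (v j)))).
Definition psd (n : nat) (A : Mat) : Prop :=
  forall v : nat -> Cx, im (quad n A v) = 0 /\ 0 <= re (quad n A v).

Definition QMap := Mat -> Mat.

Definition qlinear (E : QMap) : Prop :=
  (forall X Y, Meq 2 X Y -> Meq 2 (E X) (E Y)) /\
  (forall a X Y, Meq 2 (E (madd (mscale a X) Y)) (madd (mscale a (E X)) (E Y))).

(* (id_n (x) E) applied to a 2n x 2n matrix Y; index 2k+a <-> (k,a) *)
Definition block (Y : Mat) (k l : nat) : Mat :=
  fun a b => Y (2 * k + a)%nat (2 * l + b)%nat.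
Definition ampl (E : QMap) (Y : Mat) : Mat :=
  fun i j => E (block Y (i / 2)%nat (j / 2)%nat) (i mod 2) (j mod 2).

Definition completely_positive (E : QMap) : Prop :=
  forall (n : nat) (Y : Mat), psd (2 * n) Y -> psd (2 * n) (ampl E Y).
Definition trace_preserving (E : QMap) : Prop :=
  forall X, mtr 2 (E X) = mtr 2 X.
Definition CPTP (E : QMap) : Prop :=
  qlinear E /\ completely_positive E /\ trace_preserving E.

Definition is_inverse (L Linv : QMap) : Prop :=
  (forall X, Meq 2 (L (Linv X)) X) /\ (forall X, Meq 2 (Linv (L X)) X).

Definition mat2 (a b c d : Cx) : Mat :=
  fun i j => match i, j with
             | O, O => a | O, S O => b | S O, O => c | S O, S O => d
             | _, _ => C0 end.
Definition sigma (mu : nat) : Mat :=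
  match mu with
  | O => mat2 C1 C0 C0 C1
  | S O => mat2 C0 C1 C1 C0
  | S (S O) => mat2 C0 (Cmul (RtoC (-1)) Ci) Ci C0
  | _ => mat2 C1 C0 C0 (RtoC (-1))
  end.
Definition conjP (mu : nat) (X : Mat) : Mat := mmul 2 (mmul 2 (sigma mu) X) (sigma mu).
Definition pauli_channel (p : nat -> R) : QMap :=
  fun X => madd (mscale (RtoC (p 0%nat)) (conjP 0 X))
          (madd (mscale (RtoC (p 1%nat)) (conjP 1 X))
          (madd (mscale (RtoC (p 2%nat)) (conjP 2 X))
                (mscale (RtoC (p 3%nat)) (conjP 3 X)))).

Definition pprob (alpha c t : R) (mu : nat) : R :=
  match mu with
  | O => / 4 * (1 + exp (- 2 * alpha * c * t) *
                     (1 + 2 * exp (alpha * c * t) * Rpower (cosh (c * t)) alpha))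
  | S O => / 4 * (1 - exp (- 2 * alpha * c * t))
  | S (S O) => / 4 * (1 - exp (- 2 * alpha * c * t))
  | _ => / 4 * (1 + exp (- 2 * alpha * c * t) *
                     (1 - 2 * exp (alpha * c * t) * Rpower (cosh (c * t)) alpha))
  end.
Definition Lambda (alpha c t : R) : QMap := pauli_channel (pprob alpha c t).

(* ---------- two-qubit objects; index 2a+i <-> |a i> ---------- *)
Definition eunit (i j : nat) : Mat :=
  fun a b => if andb (Nat.eqb a i) (Nat.eqb b j) then C1 else C0.
(* Omega_V = 2 (V (x) id)[|Phi+><Phi+|] = sum_{ij} V(E_ij) (x) E_ij *)
Definition choi (V : QMap) : Mat :=
  fun I J => V (eunit (I mod 2) (J mod 2)) (I / 2)%nat (J / 2)%nat.

Definition ket (a00 a01 a10 a11 : R) : nat -> Cx :=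
  fun I => match I with
           | O => RtoC a00 | S O => RtoC a01 | S (S O) => RtoC a10
           | S (S (S O)) => RtoC a11 | _ => C0 end.
Definition Phi_plus  := ket (/ sqrt 2) 0 0 (/ sqrt 2).
Definition Phi_minus := ket (/ sqrt 2) 0 0 (- / sqrt 2).
Definition Psi_plus  := ket 0 (/ sqrt 2) (/ sqrt 2) 0.
Definition Pproj (psi : nat -> Cx) : Mat :=
  fun I J => Cmul (RtoC 2) (Cmul (psi I) (Cconj (psi J))).
Definition PT_B (A : Mat) : Mat :=
  fun I J => A (2 * (I / 2) + J mod 2)%nat (2 * (J / 2) + I mod 2)%nat.

Definition lam (c tau : R) : R := exp (- c * tau).
Definition Gam (c t s : R) : R := lam c (t - s) * cosh (c * t) * / cosh (c * s).

From Pilot Require Import Defs.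
From Stdlib Require Import Reals Lra Lia FunctionalExtensionality.
Open Scope R_scope.

(* Every map in the statement is a Pauli channel whose weights have the form
     pauli_diag a b = ((1+a+2b)/4, (1-a)/4, (1-a)/4, (1+a-2b)/4),
   i.e. the channel multiplies sigma_1, sigma_2 by b and sigma_3 by a.  In this
   parametrisation composition multiplies the parameters, so Lambda_t =
   pauli_diag (e^{-2 alpha c t}) (e^{-alpha c t} cosh^alpha (c t)) is inverted by
   pauli_diag (1/a) (1/b) and V_{t,s} = pauli_diag H G with
   H = lambda_{t-s}^{2 alpha} and G = Gamma_{t,s}^alpha, both in (0,1].
   The file first proves that Pauli channels with nonnegative weights summing to
   1 are CPTP (complete positivity: the amplified quadratic form is a weighted
   sum of quadratic forms at Pauli-twisted vectors), then the algebra of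
   pauli_diag (entries, composition, inverse, Choi matrix, and the splitting
   V[X] = p E1[X] + (1-p) E2[X^T] with p = (1+H)/2), then the identification and
   bounds for Lambda_t, and finally assembles the theorem. *)

Lemma Cx_ext (a b : Cx) : re a = re b -> im a = im b -> a = b.
Proof. destruct a, b; simpl; intros; subst; reflexivity. Qed.

Ltac cx := apply Cx_ext; simpl; ring.

Ltac entries2 := let i := fresh "i" in let j := fresh "j" in
  intros i j ? ?; destruct i as [|[|i]]; destruct j as [|[|j]]; try lia.

Lemma Meq_trans n A B C : Meq n A B -> Meq n B C -> Meq n A C.
Proof. intros H1 H2 i j Hi Hj. rewrite H1, H2; auto. Qed.

Lemma Meq_sym n A B : Meq n A B -> Meq n B A.
Proof. intros H i j Hi Hj; symmetry; auto. Qed.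

Lemma csum_ext n f g : (forall i, (i < n)%nat -> f i = g i) -> csum n f = csum n g.
Proof.
  induction n as [|n IH]; simpl; intros Hfg; auto.
  rewrite IH by (intros; apply Hfg; lia). rewrite Hfg by lia; reflexivity.
Qed.

Lemma csum_add n f g :
  csum n (fun i => Cadd (f i) (g i)) = Cadd (csum n f) (csum n g).
Proof. induction n as [|n IH]; simpl; [cx|]. rewrite IH. cx. Qed.

Lemma csum_scal n a f : Cmul a (csum n f) = csum n (fun i => Cmul a (f i)).
Proof. induction n as [|n IH]; simpl; [cx|]. rewrite <- IH. cx. Qed.

Lemma csum_pairs n f :
  csum (2 * n) f = csum n (fun k => Cadd (f (2 * k + 0)%nat) (f (2 * k + 1)%nat)).
Proof.
  induction n as [|n IH]; [reflexivity|].
  replace (2 * S n)%nat with (S (S (2 * n))) by lia.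
  change (csum (S (S (2 * n))) f)
    with (Cadd (Cadd (csum (2 * n) f) (f (2 * n)%nat)) (f (S (2 * n)))).
  change (csum (S n) ?g) with (Cadd (csum n g) (g n)). rewrite IH.
  replace (S (2 * n)) with (2 * n + 1)%nat by lia.
  replace (2 * n + 0)%nat with (2 * n)%nat by lia. cx.
Qed.

Lemma pair_index k a : (a < 2)%nat -> ((2 * k + a) / 2 = k /\ (2 * k + a) mod 2 = a)%nat.
Proof.
  intros Ha. split.
  - symmetry; apply (Nat.div_unique _ _ _ a); lia.
  - symmetry; apply (Nat.mod_unique _ _ k); lia.
Qed.

Definition qterm (A : Mat) (v : nat -> Cx) (i j : nat) : Cx :=
  Cmul (Cconj (v i)) (Cmul (A i j) (v j)).

Lemma quad_blocks n A v : quad (2 * n) A v = csum n (fun k => csum n (fun l =>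
  Cadd (Cadd (qterm A v (2*k+0) (2*l+0)) (qterm A v (2*k+0) (2*l+1)))
       (Cadd (qterm A v (2*k+1) (2*l+0)) (qterm A v (2*k+1) (2*l+1))))%nat).
Proof.
  unfold quad. change (fun i => csum (2 * n) (fun j => Cmul (Cconj (v i)) (Cmul (A i j) (v j))))
    with (fun i => csum (2 * n) (qterm A v i)).
  rewrite csum_pairs. apply csum_ext; intros k _. rewrite !csum_pairs, <- csum_add.
  apply csum_ext; intros; cx.
Qed.

(* The vector (1 (x) sigma_mu) v on C^{2n}. *)
Definition twist (mu : nat) (v : nat -> Cx) : nat -> Cx := fun i =>
  csum 2 (fun a => Cmul (Defs.sigma mu (i mod 2) a) (v (2 * (i / 2) + a)%nat)).

Lemma twist_eval mu v k b : (b < 2)%nat ->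
  twist mu v (2 * k + b)%nat = csum 2 (fun a => Cmul (Defs.sigma mu b a) (v (2 * k + a)%nat)).
Proof. intros Hb. unfold twist. destruct (pair_index k b Hb) as [-> ->]. reflexivity. Qed.

Lemma ampl_eval E Y k l a b : (a < 2)%nat -> (b < 2)%nat ->
  ampl E Y (2 * k + a)%nat (2 * l + b)%nat = E (block Y k l) a b.
Proof.
  intros Ha Hb. unfold ampl.
  destruct (pair_index k a Ha) as [-> ->]. destruct (pair_index l b Hb) as [-> ->].
  reflexivity.
Qed.

Lemma quad_ampl_pauli n q Y v : quad (2 * n) (ampl (pauli_channel q) Y) v =
  Cadd (Cmul (RtoC (q 0%nat)) (quad (2 * n) Y (twist 0 v)))
  (Cadd (Cmul (RtoC (q 1%nat)) (quad (2 * n) Y (twist 1 v)))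
  (Cadd (Cmul (RtoC (q 2%nat)) (quad (2 * n) Y (twist 2 v)))
        (Cmul (RtoC (q 3%nat)) (quad (2 * n) Y (twist 3 v))))).
Proof.
  rewrite !quad_blocks, !csum_scal, <- !csum_add. apply csum_ext; intros k _.
  rewrite !csum_scal, <- !csum_add. apply csum_ext; intros l _.
  unfold qterm. rewrite !ampl_eval by lia. rewrite !twist_eval by lia.
  unfold pauli_channel, conjP, mmul, madd, mscale, block, Defs.sigma, mat2. simpl. cx.
Qed.

Lemma pauli_CP q : (forall mu, (mu < 4)%nat -> 0 <= q mu) ->
  completely_positive (pauli_channel q).
Proof.
  intros Hq n Y HY v. rewrite quad_ampl_pauli.
  destruct (HY (twist 0 v)) as [Im0 Re0]. destruct (HY (twist 1 v)) as [Im1 Re1].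
  destruct (HY (twist 2 v)) as [Im2 Re2]. destruct (HY (twist 3 v)) as [Im3 Re3].
  pose proof (Hq 0%nat ltac:(lia)). pose proof (Hq 1%nat ltac:(lia)).
  pose proof (Hq 2%nat ltac:(lia)). pose proof (Hq 3%nat ltac:(lia)).
  cbn [re im Cadd Cmul RtoC]. rewrite Im0, Im1, Im2, Im3. split; [ring | nra].
Qed.

Definition rcomb (x : R) (a : Cx) (y : R) (b : Cx) : Cx :=
  Cadd (Cmul (RtoC x) a) (Cmul (RtoC y) b).

Lemma pauli_entry00 q X : pauli_channel q X 0%nat 0%nat =
  rcomb (q 0%nat + q 3%nat) (X 0%nat 0%nat) (q 1%nat + q 2%nat) (X 1%nat 1%nat).
Proof.
  unfold pauli_channel, conjP, mmul, madd, mscale, Defs.sigma, mat2, rcomb. cx.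
Qed.

Lemma pauli_entry11 q X : pauli_channel q X 1%nat 1%nat =
  rcomb (q 1%nat + q 2%nat) (X 0%nat 0%nat) (q 0%nat + q 3%nat) (X 1%nat 1%nat).
Proof.
  unfold pauli_channel, conjP, mmul, madd, mscale, Defs.sigma, mat2, rcomb. cx.
Qed.

Lemma pauli_entry01 q X : pauli_channel q X 0%nat 1%nat =
  rcomb (q 0%nat - q 3%nat) (X 0%nat 1%nat) (q 1%nat - q 2%nat) (X 1%nat 0%nat).
Proof.
  unfold pauli_channel, conjP, mmul, madd, mscale, Defs.sigma, mat2, rcomb. cx.
Qed.

Lemma pauli_entry10 q X : pauli_channel q X 1%nat 0%nat =
  rcomb (q 0%nat - q 3%nat) (X 1%nat 0%nat) (q 1%nat - q 2%nat) (X 0%nat 1%nat).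
Proof.
  unfold pauli_channel, conjP, mmul, madd, mscale, Defs.sigma, mat2, rcomb. cx.
Qed.

Ltac pauli_entries := rewrite ?pauli_entry00, ?pauli_entry01, ?pauli_entry10, ?pauli_entry11.

Lemma pauli_Meq q X Y : Meq 2 X Y -> Meq 2 (pauli_channel q X) (pauli_channel q Y).
Proof.
  intros H. entries2; pauli_entries;
  rewrite ?(H 0%nat 0%nat), ?(H 0%nat 1%nat), ?(H 1%nat 0%nat), ?(H 1%nat 1%nat) by lia;
  reflexivity.
Qed.

Lemma pauli_CPTP q : (forall mu, (mu < 4)%nat -> 0 <= q mu) ->
  q 0%nat + q 1%nat + q 2%nat + q 3%nat = 1 -> CPTP (pauli_channel q).
Proof.
  intros Hq Hsum. split; [split|split].
  - apply pauli_Meq.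
  - intros a X Y. entries2; pauli_entries; unfold rcomb, madd, mscale; cx.
  - apply pauli_CP; exact Hq.
  - intros X. unfold mtr. simpl csum. pauli_entries. unfold rcomb.
    replace (q 3%nat) with (1 - q 0%nat - q 1%nat - q 2%nat) by lra. cx.
Qed.

(* Weights of the Pauli channel scaling sigma_1, sigma_2 by b and sigma_3 by a. *)
Definition pauli_diag (a b : R) : nat -> R := fun mu => match mu with
  | O => / 4 * (1 + a + 2 * b)
  | S O => / 4 * (1 - a)
  | S (S O) => / 4 * (1 - a)
  | _ => / 4 * (1 + a - 2 * b) end.

Lemma pauli_diag_compose a b a' b' X :
  Meq 2 (pauli_channel (pauli_diag a b) (pauli_channel (pauli_diag a' b') X))
        (pauli_channel (pauli_diag (a * a') (b * b')) X).
Proof. entries2; pauli_entries; unfold rcomb, pauli_diag; apply Cx_ext; simpl; field. Qed.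

Lemma pauli_diag_id X : Meq 2 (pauli_channel (pauli_diag 1 1) X) X.
Proof. entries2; pauli_entries; unfold rcomb, pauli_diag; apply Cx_ext; simpl; field. Qed.

Lemma pauli_diag_inverse a b : a <> 0 -> b <> 0 ->
  is_inverse (pauli_channel (pauli_diag a b)) (pauli_channel (pauli_diag (/ a) (/ b))).
Proof.
  intros Ha Hb. split; intros X; (eapply Meq_trans; [apply pauli_diag_compose|]).
  - rewrite !Rinv_r by assumption. apply pauli_diag_id.
  - rewrite !Rinv_l by assumption. apply pauli_diag_id.
Qed.

Lemma inverse_unique L K K' : is_inverse L K -> is_inverse L K' ->
  (forall X Y, Meq 2 X Y -> Meq 2 (K X) (K Y)) -> forall X, Meq 2 (K' X) (K X).
Proof.
  intros [_ HKL] [HLK' _] HK X. eapply Meq_trans.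
  - apply Meq_sym, HKL.
  - apply HK, HLK'.
Qed.

Lemma choi_ext V W : (forall X, Meq 2 (V X) (W X)) -> Meq 4 (choi V) (choi W).
Proof. intros H I J HI HJ. unfold choi. apply H; apply Nat.Div0.div_lt_upper_bound; lia. Qed.

Lemma sqrt2_inv_sq : / sqrt 2 * / sqrt 2 = / 2.
Proof. rewrite <- Rinv_mult, sqrt_sqrt; lra. Qed.

Lemma choi_pauli_diag a b : Meq 4 (choi (pauli_channel (pauli_diag a b)))
  (madd (mscale (RtoC (/ 2 * (a + b))) (Pproj Phi_plus))
    (madd (mscale (RtoC (/ 2 * (1 - b))) (Pproj Phi_minus))
          (mscale (RtoC (1 - / 2 * (a + b) - / 2 * (1 - b))) (PT_B (Pproj Psi_plus))))).
Proof.
  intros I J HI HJ.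
  assert (Hsqrt2 : sqrt 2 <> 0) by (apply Rgt_not_eq, sqrt_lt_R0; lra).
  destruct I as [|[|[|[|I]]]]; try lia; destruct J as [|[|[|[|J]]]]; try lia;
  unfold choi; simpl (_ / 2)%nat; simpl (_ mod 2)%nat; pauli_entries;
  unfold PT_B, Pproj, Phi_plus, Phi_minus, Psi_plus, ket, eunit, rcomb, pauli_diag,
    madd, mscale; apply Cx_ext; simpl;
  rewrite ?Ropp_mult_distr_r_reverse, ?Ropp_mult_distr_l_reverse, ?Ropp_involutive,
    ?sqrt2_inv_sq; field; exact Hsqrt2.
Qed.

Definition dephasing_part (a b : R) : nat -> R := fun mu => match mu with
  | O => (a + b) / (1 + a) | 3%nat => (1 - b) / (1 + a) | _ => 0 end.
Definition bit_flip : nat -> R := fun mu => match mu with 1%nat => 1 | _ => 0 end.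

Lemma pauli_diag_split a b X : 1 + a <> 0 ->
  Meq 2 (pauli_channel (pauli_diag a b) X)
    (madd (mscale (RtoC ((1 + a) / 2)) (pauli_channel (dephasing_part a b) X))
          (mscale (RtoC (1 - (1 + a) / 2)) (pauli_channel bit_flip (transpose X)))).
Proof.
  intros Ha. entries2; unfold madd, mscale; pauli_entries;
  unfold rcomb, pauli_diag, dephasing_part, bit_flip, transpose; apply Cx_ext; simpl;
  field; exact Ha.
Qed.

Lemma pauli_diag_split_CPTP a b : -1 < a -> - a <= b <= 1 ->
  CPTP (pauli_channel (dephasing_part a b)) /\ CPTP (pauli_channel bit_flip).
Proof.
  intros Ha Hb. split; apply pauli_CPTP; simpl.
  - intros mu Hmu. destruct mu as [|[|[|[|mu]]]]; simpl; try lra; try lia;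
    apply Rmult_le_pos; try lra; left; apply Rinv_0_lt_compat; lra.
  - field. lra.
  - intros mu Hmu. destruct mu as [|[|[|[|mu]]]]; simpl; lra.
  - lra.
Qed.

(* The eigenvalues of Lambda_t on sigma_3 and on sigma_1, sigma_2. *)
Definition z_decay (alpha c t : R) : R := exp (- 2 * alpha * c * t).
Definition x_decay (alpha c t : R) : R :=
  exp (- (alpha * c * t)) * Rpower (cosh (c * t)) alpha.

Lemma cosh_pos x : 0 < cosh x.
Proof. unfold cosh. pose proof (exp_pos x); pose proof (exp_pos (- x)); lra. Qed.

Lemma x_decay_pos alpha c t : 0 < x_decay alpha c t.
Proof. unfold x_decay, Rpower. apply Rmult_lt_0_compat; apply exp_pos. Qed.

Lemma Lambda_pauli_diag alpha c t :
  Lambda alpha c t = pauli_channel (pauli_diag (z_decay alpha c t) (x_decay alpha c t)).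
Proof.
  unfold Lambda. f_equal. apply functional_extensionality; intros mu.
  assert (Hexp : exp (- 2 * alpha * c * t) * exp (alpha * c * t) = exp (- (alpha * c * t))).
  { rewrite <- exp_plus. f_equal. ring. }
  unfold pprob, pauli_diag, z_decay, x_decay.
  destruct mu as [|[|[|mu]]]; try reflexivity; rewrite <- Hexp; ring.
Qed.

Lemma z_decay_ratio alpha c t s :
  z_decay alpha c t * / z_decay alpha c s = Rpower (lam c (t - s)) (2 * alpha).
Proof.
  unfold z_decay, Rpower, lam. rewrite ln_exp, <- exp_Ropp, <- exp_plus. f_equal. ring.
Qed.

Lemma x_decay_ratio alpha c t s :
  x_decay alpha c t * / x_decay alpha c s = Rpower (Gam c t s) alpha.
Proof.
  pose proof (cosh_pos (c * t)) as Ht; pose proof (cosh_pos (c * s)) as Hs.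
  pose proof (exp_pos (- c * (t - s))) as He.
  unfold x_decay, Gam, lam, Rpower.
  rewrite ln_mult, ln_mult, ln_exp, ln_Rinv by (auto using Rinv_0_lt_compat, Rmult_lt_0_compat).
  rewrite Rinv_mult, <- !exp_Ropp, <- !exp_plus. f_equal. ring.
Qed.

Lemma propagator_pauli_diag alpha c s t Linv :
  is_inverse (Lambda alpha c s) Linv -> forall X,
  Meq 2 (Lambda alpha c t (Linv X))
    (pauli_channel (pauli_diag (Rpower (lam c (t - s)) (2 * alpha))
                               (Rpower (Gam c t s) alpha)) X).
Proof.
  intros HL X. rewrite Lambda_pauli_diag in *.
  assert (Hz : z_decay alpha c s <> 0) by (apply Rgt_not_eq, exp_pos).
  assert (Hx : x_decay alpha c s <> 0) by (apply Rgt_not_eq, x_decay_pos).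
  eapply Meq_trans.
  - apply pauli_Meq, (inverse_unique _ _ _ (pauli_diag_inverse _ _ Hz Hx) HL), pauli_Meq.
  - eapply Meq_trans; [apply pauli_diag_compose|].
    rewrite z_decay_ratio, x_decay_ratio. intros i j _ _; reflexivity.
Qed.

Lemma exp_le_mono x y : x <= y -> exp x <= exp y.
Proof.
  intros Hxy. destruct (Rle_lt_or_eq_dec _ _ Hxy) as [Hlt | ->].
  - left; apply exp_increasing, Hlt.
  - right; reflexivity.
Qed.

Lemma ln_nonpos x : 0 < x <= 1 -> ln x <= 0.
Proof.
  intros [Hx0 Hx1]. rewrite <- ln_1. destruct (Rle_lt_or_eq_dec _ _ Hx1) as [Hlt | ->].
  - left; apply ln_increasing; assumption.
  - right; reflexivity.
Qed.

Lemma Rpower_unit_interval x y : 0 < x <= 1 -> 0 <= y -> 0 < Rpower x y <= 1.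
Proof.
  intros [Hx0 Hx1] Hy. unfold Rpower. split; [apply exp_pos|].
  rewrite <- exp_0. apply exp_le_mono.
  pose proof (ln_nonpos x (conj Hx0 Hx1)). nra.
Qed.

Lemma lam_unit_interval c tau : 0 <= c * tau -> 0 < lam c tau <= 1.
Proof.
  intros H. unfold lam. split; [apply exp_pos|].
  rewrite <- exp_0. apply exp_le_mono. lra.
Qed.

(* Gamma_{t,s} in (0,1]: e^{-c(t-s)} cosh(ct) <= cosh(cs) for 0 <= s <= t, c >= 0. *)
Lemma Gam_unit_interval c t s : 0 <= c -> 0 <= s <= t -> 0 < Gam c t s <= 1.
Proof.
  intros Hc Hst. pose proof (cosh_pos (c * t)); pose proof (cosh_pos (c * s)).
  assert (Hcts : 0 <= c * (t - s)) by (apply Rmult_le_pos; lra).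
  assert (Hlam := lam_unit_interval c (t - s) Hcts).
  unfold Gam. split.
  - apply Rmult_lt_0_compat; [apply Rmult_lt_0_compat|apply Rinv_0_lt_compat]; lra.
  - apply (Rmult_le_reg_r (cosh (c * s))); [assumption|].
    rewrite Rmult_assoc, Rinv_l, Rmult_1_r, Rmult_1_l by lra.
    unfold lam, cosh. rewrite Rmult_div_assoc, Rmult_plus_distr_l, <- !exp_plus.
    replace (- c * (t - s) + c * t) with (c * s) by ring.
    assert (exp (- c * (t - s) + - (c * t)) <= exp (- (c * s))) by (apply exp_le_mono; lra).
    lra.
Qed.

Theorem mainTheorem10 (alpha c : R) (Halpha : 1 <= alpha) (Hc : 0 < c) :
  (forall t, 0 <= t -> exists Linv, is_inverse (Lambda alpha c t) Linv) /\
  (forall (s t : R) (Linv : QMap), 0 <= s -> s <= t ->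
     is_inverse (Lambda alpha c s) Linv ->
     let V : QMap := fun X => Lambda alpha c t (Linv X) in
     let p1 := / 2 * (Rpower (lam c (t - s)) (2 * alpha) + Rpower (Gam c t s) alpha) in
     let p2 := / 2 * (1 - Rpower (Gam c t s) alpha) in
     Meq 4 (choi V)
       (madd (mscale (RtoC p1) (Pproj Phi_plus))
         (madd (mscale (RtoC p2) (Pproj Phi_minus))
               (mscale (RtoC (1 - p1 - p2)) (PT_B (Pproj Psi_plus))))) /\
     0 <= p1 /\ 0 <= p2 /\ p1 + p2 <= 1 /\
     exists p : R, 0 <= p <= 1 /\
       exists E1 E2 : QMap, CPTP E1 /\ CPTP E2 /\
         forall X : Mat,
           Meq 2 (V X) (madd (mscale (RtoC p) (E1 X))
                             (mscale (RtoC (1 - p)) (E2 (transpose X))))).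
Proof.
  split.
  - intros t _. rewrite Lambda_pauli_diag. eexists.
    apply pauli_diag_inverse; apply Rgt_not_eq; [apply exp_pos | apply x_decay_pos].
  - intros s t Linv Hs Hst HL V p1 p2.
    pose proof (propagator_pauli_diag alpha c s t Linv HL) as HV.
    assert (HH : 0 < Rpower (lam c (t - s)) (2 * alpha) <= 1).
    { apply Rpower_unit_interval; [apply lam_unit_interval; nra | lra]. }
    assert (HG : 0 < Rpower (Gam c t s) alpha <= 1).
    { apply Rpower_unit_interval; [apply Gam_unit_interval | ]; lra. }
    unfold p1, p2 in *.
    set (H := Rpower (lam c (t - s)) (2 * alpha)) in *.
    set (G := Rpower (Gam c t s) alpha) in *.
    destruct (pauli_diag_split_CPTP H G) as [HE1 HE2]; try lra.
    split; [|split; [|split; [|split]]]; try lra.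
    + eapply Meq_trans; [apply choi_ext, HV | apply choi_pauli_diag].
    + exists ((1 + H) / 2). split; [lra|].
      do 2 eexists; split; [exact HE1|split; [exact HE2|]].
      intros X. eapply Meq_trans; [apply HV | apply pauli_diag_split; lra].
Qed.
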